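(* Let $G$ be a finite GVZ-group with $|\mathrm{cd}(G)|=2$. Then $G$ has nilpotency class $2$.
   Context: All groups are finite. $\mathrm{Irr}(G)$ is the set of complex irreducible characters of $G$ and $\mathrm{cd}(G)=\{\chi(1):\chi\in\mathrm{Irr}(G)\}$. For a character $\chi$, $Z(\chi)=\{g\in G: |\chi(g)|=\chi(1)\}$. A nonabelian group $G$ is a GVZ-group if for every $\chi\in\mathrm{Irr}(G)$ we have $\chi(g)=0$ for all $g\in G\setminus Z(\chi)$. *)

From mathcomp Require Import all_boot all_order all_algebra all_fingroup all_solvable all_field all_character.
Set Implicit Arguments. Unset Strict Implicit. Unset Printing Implicit Defensive.
Import GRing.Theory Num.Theory.
Local Open Scope ring_scope.

Definition cd (gT : finGroupType) (G : {group gT}) : seq algC :=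
  undup [seq 'chi[G]_i 1%g | i : Iirr G].

Definition GVZ (gT : finGroupType) (G : {group gT}) : Prop :=
  ~~ abelian G /\
  forall (i : Iirr G) (g : gT), g \in G -> g \notin ('Z('chi[G]_i))%CF ->
    'chi[G]_i g = 0.

From mathcomp Require Import all_boot all_order all_algebra all_fingroup all_solvable all_field all_character.
Set Implicit Arguments. Unset Strict Implicit. Unset Printing Implicit Defensive.
Import GRing.Theory Num.Theory.
Local Open Scope ring_scope.

(* If chi vanishes off Z(chi) then chi(1)^2 = |G : Z(chi)|, so the center of
   chi is determined by its degree.  Let chi be nonlinear with G' not in
   Z := Z(chi).  As G/Z is nonabelian, it has a nonlinear irreducible
   character, whose inflation psi has ker psi >= Z and, since cd(G) = {1, d},
   the same degree as chi; hence Z(psi) has the same index as Z, so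
   Z = ker psi = Z(psi).  Then psi is a multiple of the indicator of its
   kernel, so it is not orthogonal to 1 and must be trivial, a contradiction.
   Thus G' lies in every Z(chi), i.e. in Z(G). *)

Lemma irr_lin_charE (gT : finGroupType) (G : {group gT}) (i : Iirr G) :
  ('chi_i \is a linear_char) = ('chi_i 1%g == 1).
Proof. by rewrite qualifE/= irr_char. Qed.

Section CharacterDegrees.
Variables (gT : finGroupType) (G : {group gT}).

Lemma irr1_in_cd (i : Iirr G) : 'chi_i 1%g \in cd G.
Proof. by rewrite mem_undup; apply/mapP; exists i; rewrite ?mem_enum. Qed.

Lemma cd_size_le2_irr1_eq (i j : Iirr G) : (size (cd G) <= 2)%N ->
  'chi_i 1%g != 1 -> 'chi_j 1%g != 1 -> 'chi_i 1%g = 'chi_j 1%g.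
Proof.
move=> cd_le2 chi_i1 chi_j1; apply/eqP; apply: contraTT cd_le2 => neq_ij.
rewrite -ltnNge; apply: (@uniq_leq_size _ [:: 1; 'chi_i 1%g; 'chi_j 1%g]).
  by rewrite /= !inE negb_or !(eq_sym 1) chi_i1 chi_j1 neq_ij.
move=> x; rewrite !inE => /or3P[] /eqP->; rewrite ?irr1_in_cd //.
by have := irr1_in_cd 0; rewrite irr0 cfun1E group1.
Qed.

Lemma GVZ_irr_on_cfcenter (i : Iirr G) :
  GVZ G -> 'chi_i \in 'CF(G, 'Z('chi_i)%CF).
Proof.
case=> _ vanish; apply/cfun_onP => x notZx.
by have [Gx | /cfun0->] := boolP (x \in G); first exact: vanish.
Qed.

Lemma irr1_sqr_index_cfcenter (i : Iirr G) :
  'chi_i \in 'CF(G, 'Z('chi_i)%CF) ->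
  ('chi_i 1%g) ^+ 2 = (#|G : 'Z('chi_i)%CF|)%g%:R.
Proof. by move=> onZ; apply/eqP; rewrite (irr1_bound i).2. Qed.

Lemma irr_on_cfker_eq0 (i : Iirr G) : 'chi_i \in 'CF(G, cfker 'chi_i) -> i = 0.
Proof.
move=> onK; have nsKG := cfker_normal 'chi_i.
have chiE : 'chi_i = 'chi_i 1%g *: '1_(cfker 'chi_i).
  apply/cfunP => x; rewrite cfunE cfuniE //.
  have [Kx | notKx] := boolP (x \in cfker 'chi_i).
    by rewrite mulr1; move: Kx; rewrite cfkerEirr inE => /eqP.
  by rewrite mulr0 (cfun_onP onK).
have := cfdot_irr i 0; rewrite chiE irr0 -cfuniG cfdotZl cfdot_cfuni //.
rewrite (setIidPl (normal_sub nsKG)); case: eqP => // _ /eqP.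
by rewrite mulf_eq0 (negPf (irr1_neq0 i)) mulf_eq0 invr_eq0 !(negPf (neq0CG _)).
Qed.

Lemma cfcenter_sub_cfker_irr_eq0 (i k : Iirr G) :
  'chi_i \in 'CF(G, 'Z('chi_i)%CF) -> 'chi_k \in 'CF(G, 'Z('chi_k)%CF) ->
  'chi_i 1%g = 'chi_k 1%g -> 'Z('chi_i)%CF \subset cfker 'chi_k -> k = 0.
Proof.
move=> onZi onZk eq_deg sZiKk.
have sKkZk := normal_sub (cfker_center_normal 'chi_k).
have eq_index : #|G : 'Z('chi_i)%CF|%g = #|G : 'Z('chi_k)%CF|%g.
  by apply/eqP; rewrite -(eqr_nat algC) -!irr1_sqr_index_cfcenter ?eq_deg.
have eq_card : #|'Z('chi_i)%CF| = #|'Z('chi_k)%CF|.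
  apply/eqP; rewrite -(eqn_pmul2r (indexg_gt0 G 'Z('chi_k)%CF)) -{1}eq_index.
  by rewrite !Lagrange ?cfcenter_sub.
have ZkE : cfker 'chi_k = 'Z('chi_k)%CF.
  by apply/eqP; rewrite eqEcard sKkZk -eq_card subset_leq_card.
by apply: irr_on_cfker_eq0; rewrite ZkE.
Qed.

Lemma der1_sub_cfcenter_irr (i : Iirr G) :
  (forall j, 'chi[G]_j \in 'CF(G, 'Z('chi_j)%CF)) -> (size (cd G) <= 2)%N ->
  G^`(1)%g \subset 'Z('chi_i)%CF.
Proof.
move=> onZ cd_le2; have [chi_i_lin | chi_i_nonlin] := boolP ('chi_i 1%g == 1).
  apply: subset_trans (normal_sub (cfker_center_normal _)).
  by apply: lin_char_der1; rewrite irr_lin_charE.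
set Z := 'Z('chi_i)%CF; have nsZG : (Z <| G)%g := cfcenter_normal _.
apply: contraT => not_der1_sub.
have /forallPn[j] : ~~ [forall j : Iirr (G / Z), 'chi_j \is a linear_char].
  apply: contra not_der1_sub => /forallP all_lin.
  by apply: der1_min (normal_norm nsZG) _; apply/char_abelianP.
have psiE := mod_IirrE j nsZG; set k := mod_Iirr j in psiE.
have psi1 : 'chi_k 1%g = 'chi_j 1%g by rewrite psiE cfMod1.
rewrite irr_lin_charE -psi1 => psi_nonlin.
have k0 : k = 0.
  apply: (cfcenter_sub_cfker_irr_eq0 (onZ i) (onZ k)).
    exact: cd_size_le2_irr1_eq.
  by rewrite psiE cfker_mod.
by move: psi_nonlin; rewrite k0 irr0 cfun1E group1 eqxx.
Qed.

End CharacterDegrees.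

Lemma nil_class2_der1_sub_center (gT : finGroupType) (G : {group gT}) :
  ~~ abelian G -> (G^`(1) \subset 'Z(G))%g -> nilpotent G /\ nil_class G = 2.
Proof.
move=> nabG der1_sub_center.
have L3_1 : 'L_3(G)%g = 1%g.
  rewrite lcnSn lcn2; apply/commG1P.
  exact: subset_trans der1_sub_center (subsetIr _ _).
have nilG : nilpotent G by apply/lcnP; exists 2.
split=> //; apply/eqP; rewrite eqn_leq ltnNge nil_class1 nabG andbT.
exact/(lcn_nil_classP 2).
Qed.

Theorem mainTheorem5 (gT : finGroupType) (G : {group gT}) :
  GVZ G -> size (cd G) = 2 -> nilpotent G /\ nil_class G = 2.
Proof.
move=> gvzG cd2; apply: nil_class2_der1_sub_center; first exact: gvzG.1.
rewrite -cap_cfcenter_irr; apply/bigcapsP => i _.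
by apply: der1_sub_cfcenter_irr; [move=> j; apply: GVZ_irr_on_cfcenter | rewrite cd2].
Qed.
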